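(* For every positive integer $n$, the splitting graph $\mathrm{Spltg}(K_{1,n})$ of the star $K_{1,n}$ admits a signed product cordial labeling.
   Context: A graph $G$ is signed product cordial if there is a vertex labeling $\alpha: V(G)\to\{1,-1\}$ such that, with the induced edge labeling $\alpha^*(uv)=\alpha(u)\alpha(v)$, we have $|v_\alpha(-1)-v_\alpha(1)|\le 1$ and $|e_{\alpha^*}(-1)-e_{\alpha^*}(1)|\le 1$. Here $v_\alpha(x)$ is the number of vertices labeled $x$ and $e_{\alpha^*}(x)$ is the number of edges labeled $x$; such an $\alpha$ is called a signed product cordial labeling. The splitting graph $\mathrm{Spltg}(G)$ of a graph $G$ is obtained from $G$ by adding, for each vertex $v$ of $G$, a new vertex $v'$ made adjacent to exactly the neighbors of $v$ in $G$. The star $K_{1,n}$ has an apex vertex $v_0$ adjacent to $n$ pendant vertices $v_1,\dots,v_n$. *)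

From mathcomp Require Import all_boot.
Set Implicit Arguments. Unset Strict Implicit. Unset Printing Implicit Defensive.

Record sgraph := SGraph {
  vtx : finType;
  adj : rel vtx;
  adj_sym : symmetric adj;
  adj_irr : irreflexive adj }.

Definition edges (G : sgraph) : {set {set vtx G}} :=
  [set E : {set vtx G} | [exists u, exists v, adj u v && (E == [set u; v])]].

(* Vertex labeling alpha : V -> {1, -1}, encoded as bool:
   true = 1, false = -1. *)
Definition vcount (G : sgraph) (alpha : vtx G -> bool) (b : bool) : nat :=
  #|[set v | alpha v == b]|.

(* induced edge label alpha(u)*alpha(v): it is 1 iff alpha u == alpha v *)
Definition ecount (G : sgraph) (alpha : vtx G -> bool) (b : bool) : nat :=
  #|[set E in edges G | [exists u, exists v,
        [&& E == [set u; v], adj u v & (alpha u == alpha v) == b]]]|.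

Definition dist (a b : nat) : nat := (a - b) + (b - a).

Definition signed_product_cordial_labeling (G : sgraph) (alpha : vtx G -> bool) :=
  dist (vcount alpha false) (vcount alpha true) <= 1 /\
  dist (ecount alpha false) (ecount alpha true) <= 1.

Definition signed_product_cordial (G : sgraph) :=
  exists alpha : vtx G -> bool, signed_product_cordial_labeling alpha.

(* Splitting graph: vertices inl v (original) and inr v (the copy v');
   original edges kept, v' adjacent to exactly the G-neighbours of v. *)
Definition spl_adj (G : sgraph) : rel (vtx G + vtx G) :=
  fun x y => match x, y with
  | inl u, inl v => adj u v
  | inl u, inr v => adj u v
  | inr u, inl v => adj u v
  | inr _, inr _ => false
  end.

Lemma spl_adj_sym G : symmetric (@spl_adj G).
Proof. by case=> u [] v //=; apply: adj_sym. Qed.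

Lemma spl_adj_irr G : irreflexive (@spl_adj G).
Proof. by case=> u //=; apply: adj_irr. Qed.

Definition Spltg (G : sgraph) : sgraph :=
  @SGraph (vtx G + vtx G)%type (@spl_adj G) (@spl_adj_sym G) (@spl_adj_irr G).

Definition star_adj (n : nat) : rel 'I_n.+1 :=
  fun i j => ((val i == 0) && (val j != 0)) || ((val j == 0) && (val i != 0)).

Lemma star_adj_sym n : symmetric (@star_adj n).
Proof. by move=> i j; rewrite /star_adj orbC. Qed.

Lemma star_adj_irr n : irreflexive (@star_adj n).
Proof. by move=> i; rewrite /star_adj; case: (val i == 0). Qed.

Definition star (n : nat) : sgraph :=
  @SGraph 'I_n.+1 (@star_adj n) (@star_adj_sym n) (@star_adj_irr n).

From mathcomp Require Import all_boot zify.

Set Implicit Arguments. Unset Strict Implicit. Unset Printing Implicit Defensive.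

(* Label every copy v' of Spltg G with the sign opposite to that of v. The
   vertex labels are then balanced for free, and every edge uv of G of sign s
   yields the three edges uv, uv', u'v of Spltg G, of signs s, -s, -s. Hence
   e_s(Spltg G) = e_s(G) + 2 e_-s(G), so the edge imbalance of Spltg G is that
   of G with the sign flipped. The star K_{1,n} has an edge-balanced labeling
   (apex and half of the leaves labelled 1), which is all that is needed. *)

Lemma eq_set2E (T : finType) (x y u v : T) :
  ([set x; y] == [set u; v]) = (x == u) && (y == v) || (x == v) && (y == u).
Proof.
apply/eqP/idP => [E | /orP[] /andP[/eqP-> /eqP->] //]; last exact: setUC.
have Hx : x \in [set u; v] by rewrite -E set21.
have Hy : y \in [set u; v] by rewrite -E set22.
have Hu : u \in [set x; y] by rewrite E set21.
have Hv : v \in [set x; y] by rewrite E set22.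
by case/set2P: Hx Hy Hu Hv => Ex /set2P[] Ey /set2P[] Eu /set2P[] Ev; subst;
  rewrite ?eqxx ?orbT.
Qed.

Definition arcs (G : sgraph) (P : rel (vtx G)) : {set vtx G * vtx G} :=
  [set p | adj p.1 p.2 && P p.1 p.2].

Definition edge_labelled (T : Type) (alpha : T -> bool) (b : bool) : rel T :=
  fun u v => (alpha u == alpha v) == b.

Section Arcs.

Variable G : sgraph.

Lemma card_arcs (P : rel (vtx G)) : symmetric P ->
  #|arcs P| = 2 * #|[set E in edges G |
                      [exists u, exists v, [&& E == [set u; v], adj u v & P u v]]]|.
Proof.
move=> Psym; set Es := [set E in edges G | _].
rewrite -sum1_card (partition_big (fun p => [set p.1; p.2]) (mem Es)) /=; last first.
  move=> [u v]; rewrite !inE /= => /andP[uv Puv].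
  by apply/andP; split; apply/existsP; exists u; apply/existsP; exists v;
    rewrite eqxx uv ?Puv.
rewrite -sum1_card big_distrr /=; apply: eq_bigr => E.
rewrite inE => /andP[_ /existsP[u /existsP[v /and3P[/eqP-> uv Puv]]]].
have vu : adj v u by rewrite adj_sym.
have uv_neq_vu : (u, v) != (v, u).
  by rewrite xpair_eqE; apply/nandP; left; apply: contraTneq uv => ->; rewrite adj_irr.
have -> : 2 = #|[set (u, v); (v, u)]| by rewrite cards2 uv_neq_vu.
rewrite muln1 -sum1_card; apply: eq_bigl => -[x y].
rewrite !inE /= eq_set2E !xpair_eqE.
apply/idP/idP => [/andP[_ //] | /orP[] /andP[/eqP-> /eqP->]].
  by rewrite uv Puv !eqxx.
by rewrite vu -Psym Puv !eqxx orbT.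
Qed.

Lemma card_arcsE (P : rel (vtx G)) :
  #|arcs P| = \sum_u \sum_v (adj u v && P u v : nat).
Proof.
by rewrite -sum1dep_card pair_big big_mkcond; apply: eq_bigr => -[u v].
Qed.

Lemma ecount_arcs (alpha : vtx G -> bool) b :
  2 * ecount alpha b = #|arcs (edge_labelled alpha b)|.
Proof. by rewrite card_arcs // => u v; rewrite /edge_labelled (eq_sym (alpha u)). Qed.

End Arcs.

Section Splitting.

Variable G : sgraph.

Definition spl_label (alpha : vtx G -> bool) : vtx (Spltg G) -> bool :=
  fun x => match x with inl v => alpha v | inr v => ~~ alpha v end.

Lemma vcount_spl_label (alpha : vtx G -> bool) b :
  vcount (spl_label alpha) b = #|vtx G|.
Proof.
rewrite /vcount -sum1dep_card big_mkcond big_sumType /= -big_split -sum1_card.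
by apply: eq_bigr => v _ /=; case: (alpha v); case: b.
Qed.

Lemma card_arcs_spl (alpha : vtx G -> bool) b :
  #|arcs (edge_labelled (spl_label alpha) b)| =
  #|arcs (edge_labelled alpha b)| + 2 * #|arcs (edge_labelled alpha (~~ b))|.
Proof.
rewrite !card_arcsE big_sumType /= -big_split big_distrr -big_split /=.
apply: eq_bigr => u _; rewrite !big_sumType /= [X in _ + (_ + X)]big1 // addn0.
rewrite big_distrr -!big_split /=; apply: eq_bigr => v _.
by rewrite /edge_labelled /=; case: (adj u v); case: (alpha u); case: (alpha v); case: b.
Qed.

Lemma ecount_spl_label (alpha : vtx G -> bool) b :
  ecount (spl_label alpha) b = ecount alpha b + 2 * ecount alpha (~~ b).
Proof.
apply/eqP; rewrite -(eqn_pmul2l (_ : 0 < 2)) // mulnDr.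
by rewrite !ecount_arcs card_arcs_spl.
Qed.

Lemma Spltg_signed_product_cordial (alpha : vtx G -> bool) :
  dist (ecount alpha false) (ecount alpha true) <= 1 ->
  signed_product_cordial (Spltg G).
Proof.
move=> alpha_bal; exists (spl_label alpha); split.
  by rewrite /dist !vcount_spl_label subnn.
by move: alpha_bal; rewrite /dist !ecount_spl_label /=; lia.
Qed.

End Splitting.

Lemma ecount_star n (beta : vtx (star n) -> bool) b :
  ecount beta b = #|[set j : 'I_n | edge_labelled beta b ord0 (lift ord0 j)]|.
Proof.
apply/eqP; rewrite -(eqn_pmul2l (_ : 0 < 2)) // ecount_arcs card_arcsE; apply/eqP.
rewrite -sum1dep_card [in RHS]big_mkcond !big_ord_recl /= add0n mul2n -addnn.
congr (_ + _); apply: eq_bigr => j _; rewrite big_ord_recl big1 ?addn0 //=.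
by rewrite /edge_labelled (eq_sym (beta _)).
Qed.

Lemma card_ord_lt n k : k <= n -> #|[set j : 'I_n | j < k]| = k.
Proof.
by move=> le_kn; rewrite -sum1dep_card (big_ord_narrow le_kn) sum1_card card_ord.
Qed.

Lemma star_edge_balanced n :
  exists beta : vtx (star n) -> bool,
    dist (ecount beta false) (ecount beta true) <= 1.
Proof.
pose beta : vtx (star n) -> bool := fun i => i <= n./2.
have labelE c (j : 'I_n) :
  edge_labelled beta c ord0 (lift ord0 j) = ((j < n./2) == c).
  by rewrite /edge_labelled /beta /= leq0n.
exists beta; rewrite !ecount_star.
set A := [set j : 'I_n | j < n./2].
have -> : [set j | edge_labelled beta true ord0 (lift ord0 j)] = A.
  by apply/setP => j; rewrite !inE labelE eqb_id.
have -> : [set j | edge_labelled beta false ord0 (lift ord0 j)] = ~: A.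
  by apply/setP => j; rewrite !inE labelE eqbF_neg.
have := cardsC A; rewrite card_ord card_ord_lt; last first.
  by rewrite -{2}(odd_double_half n) -addnn addnA leq_addl.
by move: (odd_double_half n); rewrite /dist; lia.
Qed.

Theorem theorem2p1 (n : nat) : 0 < n -> signed_product_cordial (Spltg (star n)).
Proof.
move=> _; have [beta beta_bal] := star_edge_balanced n.
exact: Spltg_signed_product_cordial beta_bal.
Qed.
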